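(* Let $n\ge 1$ and let $x_1,\dots,x_n$ be distinct integers, each greater than $1$, and let $D=\{1,0,x_1,\dots,x_n\}$. Then $diam(D)=3$ if $n=1$ and $diam(D)=4$ if $n>1$.
   Context: A signed tree is a pair $(T,s)$ where $T$ is a finite tree and $s:E(T)\to\{+,-\}$. The signed degree $sdeg(v)$ of a vertex is the number of incident positive edges minus the number of incident negative edges. $(T,s)$ realizes (satisfies) a set $D$ of integers if $D=\{sdeg(v):v\in V(T)\}$. For a set $D$ containing $1$ or $-1$, $diam(D)=\min\{diam(T): \text{some signed tree }(T,s)\text{ realizes }D\}$, where $diam(T)$ is the diameter of the tree $T$. *)

From mathcomp Require Import all_boot all_order all_algebra.
Set Implicit Arguments. Unset Strict Implicit. Unset Printing Implicit Defensive.
Import Order.TTheory GRing.Theory Num.Theory.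

Definition simple_graph (T : finType) (e : rel T) : Prop :=
  (forall x y, e x y = e y x) /\ (forall x, ~~ e x x).

Definition is_tree (T : finType) (e : rel T) : Prop :=
  [/\ simple_graph e, 0 < #|T|,
      (forall x y, connect e x y) &
      (forall c : seq T, uniq c -> 2 < size c -> ~~ cycle e c)].

(* A signing s : true = positive edge, false = negative edge;
   the sign of an edge does not depend on its orientation. *)
Definition signed_tree (T : finType) (e : rel T) (s : T -> T -> bool) : Prop :=
  is_tree e /\ (forall x y, e x y -> s x y = s y x).

Definition sdeg (T : finType) (e : rel T) (s : T -> T -> bool) (v : T) : int :=
  (#|[set u | e v u && s v u]|%:Z - #|[set u | e v u && ~~ s v u]|%:Z)%R.

Definition realizes (T : finType) (e : rel T) (s : T -> T -> bool)
  (D : seq int) : Prop :=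
  forall z : int, z \in D <-> exists v : T, sdeg e s v = z.

Definition walk_len (T : finType) (e : rel T) (x y : T) (n : nat) : Prop :=
  exists p : seq T, [/\ path e x p, last x p = y & size p = n].

Definition dist_is (T : finType) (e : rel T) (x y : T) (d : nat) : Prop :=
  walk_len e x y d /\ (forall m, walk_len e x y m -> d <= m).

Definition diam_is (T : finType) (e : rel T) (k : nat) : Prop :=
  (exists x y, dist_is e x y k) /\ (forall x y d, dist_is e x y d -> d <= k).

Definition diamD_is (D : seq int) (k : nat) : Prop :=
  (exists (T : finType) (e : rel T) (s : T -> T -> bool),
      [/\ signed_tree e s, realizes e s D & diam_is e k]) /\
  (forall (T : finType) (e : rel T) (s : T -> T -> bool) (d : nat),
      signed_tree e s -> realizes e s D -> diam_is e d -> k <= d).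

(* Lower bound: a vertex of signed degree 0 that has a neighbour has one positive and one
   negative edge, and a vertex of signed degree greater than 1 has two positive edges, so
   neither is a leaf.  The simple path between two distinct non-leaves extends by one edge
   at each end, and simple paths in a tree are geodesics, so the diameter is at least 3.  With three non-leaves, two of them are non-adjacent (a tree has
   no triangle), their path has length at least 2, and the diameter is at least 4.
   Upper bound: the tree built below realizes D and every vertex lies within distance 2 of
   its center; for n = 1 the only vertices at depth 2 are the leaves of the single hub,
   which are at distance 2 from each other. *)

From mathcomp Require Import all_boot all_order all_algebra.
Import Order.TTheory GRing.Theory Num.Theory.
From mathcomp Require Import zify.
Set Implicit Arguments. Unset Strict Implicit. Unset Printing Implicit Defensive.

Section Walks.
Variables (T : finType) (e : rel T).

Lemma walk_len1 x y : e x y -> walk_len e x y 1.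
Proof. by move=> exy; exists [:: y]; rewrite /= exy. Qed.

Lemma walk_len_cat x y z a b :
  walk_len e x y a -> walk_len e y z b -> walk_len e x z (a + b).
Proof.
move=> [p [pp lp <-]] [q [pq lq <-]]; exists (p ++ q).
by rewrite cat_path last_cat lp pp pq lq size_cat.
Qed.

Lemma path_rev_belast x p : symmetric e -> path e x p -> path e (last x p) (rev (belast x p)).
Proof. by move=> e_sym; rewrite rev_path; apply: sub_path => a b; rewrite e_sym. Qed.

Lemma walk_len_sym x y a : symmetric e -> walk_len e x y a -> walk_len e y x a.
Proof.
move=> e_sym [p [pp <- <-]]; exists (rev (belast x p)); split.
- exact: path_rev_belast.
- by case: p {pp} => //= z p; rewrite rev_cons last_rcons.
- by rewrite size_rev size_belast.
Qed.

End Walks.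

Section AcyclicGraph.
Variables (T : finType) (e : rel T).
Hypothesis e_sym : symmetric e.
Hypothesis e_irr : irreflexive e.
Hypothesis e_acyclic : forall c : seq T, uniq c -> 2 < size c -> ~~ cycle e c.

(* The first vertex of Q lying on P would close a cycle through x. *)
Lemma upaths_disjoint x P Q : path e x P -> path e x Q ->
  uniq (x :: P) -> uniq (x :: Q) -> head x P != head x Q -> ~~ has (mem P) Q.
Proof.
move=> pP pQ uP uQ hPQ; apply/negP => hasQ.
move: pQ uQ hPQ; case/split_find: hasQ => z q1 q2 zP q1P.
move: pP uP q1P; case/path.splitP: zP => p1 p2 pP uP q1P pQ uQ hPQ.
rewrite !cat_path !last_rcons in pP pQ; case/andP: pP => pP _; case/andP: pQ => pQ _.
have uP1 : uniq (x :: rcons p1 z) by move: uP; rewrite -cat_cons cat_uniq => /andP[].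
have [x_q1 u_q1] : x \notin q1 /\ uniq q1.
  move: uQ; rewrite -cat_cons cat_uniq /= mem_rcons inE rcons_uniq negb_or.
  by case/and3P => /and3P[/andP[_ ->] _ ->].
have dq1 : {in q1, forall v, v \notin x :: rcons p1 z}.
  move=> v vq1; rewrite inE negb_or; apply/andP; split.
    by apply: contraNneq x_q1 => <-.
  by move/hasPn/(_ v vq1): q1P; rewrite !inE mem_cat negb_or => /andP[].
have := e_acyclic (c := x :: rcons p1 z ++ rev q1).
rewrite -cat_cons cat_uniq uP1 rev_uniq u_q1 /= andbT.
have -> : ~~ has (mem (x :: rcons p1 z)) (rev q1).
  by apply/hasPn => v; rewrite mem_rev => /dq1.
rewrite size_cat size_rev size_rcons rcons_cat cat_path pP last_rcons.
have -> : path e z (rcons (rev q1) x).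
  by have := path_rev_belast e_sym pQ; rewrite last_rcons belast_rcons rev_cons.
have p1q1 : 0 < size p1 + size q1.
  by rewrite lt0n addn_eq0 !size_eq0; apply: contraNN hPQ => /andP[/eqP-> /eqP->].
by move/(_ isT); rewrite addSn !ltnS p1q1 => /(_ isT).
Qed.

Lemma upath_last_neq x (p : seq T) : uniq (x :: p) -> p != [::] -> last x p != x.
Proof.
case: p => //= a p /andP[xap _] _; apply: contraNneq xap => <-.
exact: mem_last.
Qed.

Lemma upath_unique x p q : path e x p -> path e x q ->
  uniq (x :: p) -> uniq (x :: q) -> last x p = last x q -> p = q.
Proof.
elim: p x q => [|a p IH] x [|b q] // pp pq up uq lpq.
- by have := upath_last_neq uq isT; rewrite -lpq eqxx.
- by have := upath_last_neq up isT; rewrite lpq eqxx.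
have [ab|ab] := eqVneq a b.
  subst b; case/andP: pp => _ pp; case/andP: pq => _ pq.
  by rewrite (IH a q pp pq (andP up).2 (andP uq).2).
have /negP[] := upaths_disjoint pp pq up uq ab.
apply/hasP; exists (last x (b :: q)); first by rewrite /= mem_last.
by rewrite -lpq inE /= mem_last.
Qed.

Lemma walk_len_upath x p m : path e x p -> uniq (x :: p) ->
  walk_len e x (last x p) m -> size p <= m.
Proof.
move=> pp up [q [pq lq <-]]; case: (shortenP pq) lq => q' pq' uq' sub_q' lq.
rewrite (upath_unique pp pq' up uq' (esym lq)); apply: uniq_leq_size sub_q'.
by case/andP: uq'.
Qed.

Lemma dist_upath x p : path e x p -> uniq (x :: p) -> dist_is e x (last x p) (size p).
Proof. by move=> pp up; split; [exists p | move=> m; apply: walk_len_upath]. Qed.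

(* Were c on the path, its segment from c to y and the edge c y would be distinct
   simple paths from c to y. *)
Lemma upath_rcons x p y c : path e x (rcons p y) -> uniq (x :: rcons p y) ->
  e y c -> c != last x p -> uniq (x :: rcons (rcons p y) c).
Proof.
move=> pp up eyc cNl; rewrite -rcons_cons rcons_uniq up andbT.
have cNy : c != y by apply: contraTneq eyc => ->; rewrite e_irr.
rewrite -rcons_cons mem_rcons inE (negbTE cNy) /=; apply/negP => cin.
move: pp up cNl; rewrite -[path e x _]/(sorted e (rcons (x :: p) y)) -rcons_cons.
rewrite -[last x p]/(last x (x :: p)).
case/path.splitP: cin => s1 s2; rewrite cat_rcons rcons_cat => /cat_sorted2[_ ps2].
rewrite cat_uniq => /and3P[_ _ us2].
have e_cy : path e c [:: y] by rewrite /= e_sym eyc.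
have u_cy : uniq [:: c; y] by rewrite /= inE cNy.
have := upath_unique ps2 e_cy us2 u_cy; rewrite last_rcons => /(_ erefl).
by case: s2 {ps2 us2} => [|? []] //; rewrite cats1 last_rcons eqxx.
Qed.

Lemma upath_rev x p : path e x p -> uniq (x :: p) ->
  path e (last x p) (rev (belast x p)) /\ uniq (last x p :: rev (belast x p)).
Proof.
by move=> pp up; rewrite -rev_rcons -lastI rev_uniq; split=> //; apply: path_rev_belast.
Qed.

Definition nonleaf v := exists a b, [/\ e v a, e v b & a != b].

Lemma nonleaf_neighbor v z : nonleaf v -> exists2 a, e v a & a != z.
Proof.
case=> a [b [va vb ab]]; have [az|] := eqVneq a z; last by exists a.
by exists b; rewrite // -az eq_sym.
Qed.

Lemma diam_ge_upath_nonleaf u p d : path e u p -> uniq (u :: p) -> p != [::] ->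
  nonleaf u -> nonleaf (last u p) -> diam_is e d -> (size p).+2 <= d.
Proof.
case/lastP: p => [|p w] // pp up _ nl_u; rewrite last_rcons => nl_w [_ diam_d].
have [b wb bNl] := nonleaf_neighbor (last u p) nl_w.
have up2 := upath_rcons pp up wb bNl.
have pp2 : path e u (rcons (rcons p w) b) by rewrite rcons_path pp last_rcons.
have [] := upath_rev pp2 up2; rewrite last_rcons belast_rcons rev_cons => pr ur.
have [a ua aNh] := nonleaf_neighbor (head b (rcons p w)) nl_u.
have aNl : a != last b (rev (rcons p w)).
  by case: (rcons p w) aNh => //= c s; rewrite rev_cons last_rcons.
have pr2 : path e b (rcons (rcons (rev (rcons p w)) u) a).
  by rewrite rcons_path pr last_rcons.
have := diam_d _ _ _ (dist_upath pr2 (upath_rcons pr ur ua aNl)).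
by rewrite !size_rcons size_rev size_rcons.
Qed.

Hypothesis e_conn : forall x y, connect e x y.

Lemma upath_exists x y : exists p, [/\ path e x p, uniq (x :: p) & last x p = y].
Proof.
have /connectP[p pp ->] := e_conn x y.
by case: (shortenP pp) => p' pp' up' _; exists p'.
Qed.

Lemma diam_ge_nonleaf u w d : u != w -> nonleaf u -> nonleaf w -> diam_is e d ->
  3 <= d /\ (~~ e u w -> 4 <= d).
Proof.
move=> uNw nl_u nl_w diam_d; have [p [pp up lp]] := upath_exists u w.
have p0 : p != [::] by apply: contraNneq uNw => p0; rewrite -lp p0.
rewrite -lp in nl_w; have := diam_ge_upath_nonleaf pp up p0 nl_u nl_w diam_d.
case: p pp lp p0 {up nl_w} => [|a [|b p]] //=.
  by rewrite andbT => ua <- _ le3d; rewrite ua.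
by move=> _ _ _ le_d; split=> [|_]; apply: leq_trans le_d.
Qed.

Lemma diam_ge_nonleaf3 u v w d : u != v -> v != w -> u != w ->
  nonleaf u -> nonleaf v -> nonleaf w -> diam_is e d -> 4 <= d.
Proof.
move=> uNv vNw uNw nl_u nl_v nl_w diam_d.
have [_ uv4] := diam_ge_nonleaf uNv nl_u nl_v diam_d.
have [_ vw4] := diam_ge_nonleaf vNw nl_v nl_w diam_d.
have [_ uw4] := diam_ge_nonleaf uNw nl_u nl_w diam_d.
have [euv|] := boolP (e u v); last exact: uv4.
have [evw|] := boolP (e v w); last exact: vw4.
have [euw|] := boolP (e u w); last exact: uw4.
have := e_acyclic (c := [:: u; v; w]).
by rewrite /= !inE negb_or uNv uNw vNw euv evw e_sym euw => /(_ isT isT).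
Qed.

End AcyclicGraph.

Section ParentTree.
Variables (T : finType) (par : T -> option T) (depth : T -> nat) (root : T).
Hypothesis depth_par : forall x y, par x = Some y -> depth x = (depth y).+1.
Hypothesis par_None : forall x, par x = None -> x = root.
Hypothesis depth_root : depth root = 0.

Definition parent_rel : rel T := fun x y => (par x == Some y) || (par y == Some x).

Lemma parent_rel_sym : symmetric parent_rel.
Proof. by move=> x y; rewrite /parent_rel orbC. Qed.

Lemma parent_rel_irr : irreflexive parent_rel.
Proof.
by move=> x; rewrite /parent_rel orbb; apply/negP => /eqP/depth_par/n_Sn.
Qed.

Lemma walk_len_root x : walk_len parent_rel x root (depth x).
Proof.
move dx: (depth x) => k; elim: k x dx => [|k IH] x dx.
  case px: (par x) => [y|]; first by move: (depth_par px); rewrite dx.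
  by rewrite (par_None px); exists [::].
case px: (par x) => [y|]; last by move: dx; rewrite (par_None px) depth_root.
have dy : depth y = k by move: (depth_par px); rewrite dx => -[].
have xy : parent_rel x y by rewrite /parent_rel px eqxx.
by rewrite -add1n; apply: walk_len_cat (walk_len1 xy) (IH y dy).
Qed.

Lemma parent_rel_connect x y : connect parent_rel x y.
Proof.
have := walk_len_cat (walk_len_root x) (walk_len_sym parent_rel_sym (walk_len_root y)).
by case=> p [pp lp _]; apply/connectP; exists p.
Qed.

(* A deepest vertex of a cycle has two distinct cycle neighbours, and both must be its
   parent. *)
Lemma parent_rel_acyclic (c : seq T) : uniq c -> 2 < size c -> ~~ cycle parent_rel c.
Proof.
move=> uc sc; apply/negP => cc.
have [v0 v0c] : exists v0, v0 \in c by case: c sc {uc cc} => // v0 c; exists v0; exact: mem_head.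
case: (@arg_maxnP _ v0 (fun w => w \in c) depth v0c) => v vc deepest.
case: (rot_to vc) => i s rot_c.
have : cycle parent_rel (v :: s) by rewrite -rot_c rot_cycle.
have : uniq (v :: s) by rewrite -rot_c rot_uniq.
have : 2 < size (v :: s) by rewrite -rot_c size_rot.
have s_c w : w \in s -> depth w <= depth v.
  by move=> ws; apply: deepest; rewrite -(mem_rot i) rot_c inE ws orbT.
case: s rot_c s_c => [|a [|b s]] // _ s_c _.
rewrite /= rcons_path => /and4P[_ a_bs _ _] /and4P[va _ _ lv].
have par_of w : w \in [:: a, b & s] -> parent_rel v w -> par v = Some w.
  move=> ws; rewrite /parent_rel => /orP[/eqP //|/eqP/depth_par dw].
  by have := s_c w ws; rewrite dw ltnn.
have l_c : last b s \in [:: a, b & s] by rewrite inE mem_last orbT.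
have := par_of _ l_c; rewrite parent_rel_sym (par_of a (mem_head _ _) va) => /(_ lv) [a_l].
by rewrite a_l mem_last in a_bs.
Qed.

Lemma parent_rel_tree : is_tree parent_rel.
Proof.
split; [by split; [apply: parent_rel_sym | by move=> x; rewrite parent_rel_irr] | | |].
- by apply/card_gt0P; exists root.
- exact: parent_rel_connect.
- exact: parent_rel_acyclic.
Qed.

End ParentTree.

Section SignedDegree.
Variables (T : finType) (e : rel T) (s : T -> T -> bool).
Local Open Scope ring_scope.

Lemma sdeg_gt1_nonleaf v : 1 < sdeg e s v -> nonleaf e v.
Proof.
rewrite /sdeg => sdeg_gt1; have : (1 < #|[set u | e v u && s v u]|)%N by lia.
by case/card_gt1P => a [b []]; rewrite !inE => /andP[va _] /andP[vb _] ab; exists a, b.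
Qed.

Lemma sdeg0_nonleaf v c : sdeg e s v = 0 -> e v c -> nonleaf e v.
Proof.
rewrite /sdeg => /eqP; rewrite subr_eq0 eqz_nat => /eqP balanced vc.
have : (0 < #|[set u | e v u && s v u]|)%N.
  case sc: (s v c); last rewrite balanced; by apply/card_gt0P; exists c; rewrite inE vc sc.
move=> pos_gt0; move: (pos_gt0); rewrite balanced => /card_gt0P[b].
case/card_gt0P: pos_gt0 => a; rewrite !inE => /andP[va sa] /andP[vb sb].
by exists a, b; split=> //; apply: contraNneq sb => <-.
Qed.

Hypothesis e_tree : is_tree e.

Lemma sdeg_gt1_neq_sdeg0 u w : sdeg e s u = 0 -> 1 < sdeg e s w -> u != w.
Proof. by move=> u0; apply: contraTneq => <-; rewrite u0. Qed.

Lemma sdeg0_tree_nonleaf u w : sdeg e s u = 0 -> u != w -> nonleaf e u.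
Proof.
case: e_tree => _ _ e_conn _ u0 uNw; have /connectP[[|c p] /= ucp lp] := e_conn u w.
  by rewrite lp eqxx in uNw.
by case/andP: ucp => uc _; apply: sdeg0_nonleaf u0 uc.
Qed.

Lemma sdeg_diam_ge3 u w d :
  diam_is e d -> sdeg e s u = 0 -> 1 < sdeg e s w -> (3 <= d)%N.
Proof.
case: e_tree => -[e_sym e_irr] _ e_conn e_acyclic diam_d u0 w_gt1.
have uNw := sdeg_gt1_neq_sdeg0 u0 w_gt1.
by have [] := diam_ge_nonleaf e_sym (fun x => negbTE (e_irr x)) e_acyclic e_conn uNw
  (sdeg0_tree_nonleaf u0 uNw) (sdeg_gt1_nonleaf w_gt1) diam_d.
Qed.

Lemma sdeg_diam_ge4 u w1 w2 d : diam_is e d -> sdeg e s u = 0 ->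
  1 < sdeg e s w1 -> 1 < sdeg e s w2 -> sdeg e s w1 != sdeg e s w2 -> (4 <= d)%N.
Proof.
case: e_tree => -[e_sym e_irr] _ e_conn e_acyclic diam_d u0 w1_gt1 w2_gt1 w1Nw2.
have uNw1 := sdeg_gt1_neq_sdeg0 u0 w1_gt1.
apply: (diam_ge_nonleaf3 e_sym (fun x => negbTE (e_irr x)) e_acyclic e_conn uNw1 _ _
  (sdeg0_tree_nonleaf u0 uNw1) (sdeg_gt1_nonleaf w1_gt1) (sdeg_gt1_nonleaf w2_gt1) diam_d).
  by apply: contraNneq w1Nw2 => ->.
exact: sdeg_gt1_neq_sdeg0 u0 w2_gt1.
Qed.

End SignedDegree.

(* The center is joined negatively to hubs h_1 .. h_n and positively to n pendant leaves;
   hub h_i carries m_i positive leaves, so its signed degree is m_i - 1. *)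
Section Construction.
Variables (n : nat) (m : 'I_n -> nat).

Definition vertex := option ('I_n + ('I_n + {i : 'I_n & 'I_(m i)})).

Definition center : vertex := None.
Definition hub i : vertex := Some (inl i).
Definition pendant j : vertex := Some (inr (inl j)).
Definition hub_leaf i (k : 'I_(m i)) : vertex := Some (inr (inr (Tagged _ k))).

Definition vparent (v : vertex) : option vertex :=
  match v with
  | None => None
  | Some (inl _) | Some (inr (inl _)) => Some center
  | Some (inr (inr k)) => Some (hub (tag k))
  end.

Definition vdepth (v : vertex) : nat :=
  match v with
  | None => 0
  | Some (inl _) | Some (inr (inl _)) => 1
  | Some (inr (inr _)) => 2
  end.

Definition vedge : rel vertex := parent_rel vparent.

Definition is_hub (v : vertex) := if v is Some (inl _) then true else false.

Definition vsign (a b : vertex) : bool :=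
  ~~ ((a == center) && is_hub b || (b == center) && is_hub a).

Lemma vparent_depth x y : vparent x = Some y -> vdepth x = (vdepth y).+1.
Proof. by case: x => [[i|[j|[i k]]]|] //= [<-]. Qed.

Lemma vparent_None x : vparent x = None -> x = center.
Proof. by case: x => [[i|[j|[i k]]]|]. Qed.

Lemma vsigned_tree : signed_tree vedge vsign.
Proof.
split; first exact: parent_rel_tree vparent_depth vparent_None erefl.
by move=> a b _; rewrite /vsign orbC.
Qed.

Lemma walk_len_center v : walk_len vedge v center (vdepth v).
Proof. exact: (walk_len_root vparent_depth vparent_None (erefl : vdepth center = 0)). Qed.

Ltac neighbor_set :=
  apply/setP; case=> [[?|[?|[i' k']]]|];
  rewrite !inE /vedge /parent_rel /vsign /center /hub /hub_leaf /=
    ?(inj_eq Some_inj, inj_eq inl_inj, inj_eq inr_inj) /=;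
  try by [ rewrite imset_f | apply/esym/imsetP => -[? _ []] | rewrite ?andbF
         | rewrite ?orbF ?andbT eq_sym ].

Lemma hub_leaf_inj i : injective (@hub_leaf i).
Proof.
by move=> a b [] /(congr1 (tagged_as (Tagged _ a))); rewrite !tagged_asE.
Qed.

Local Open Scope ring_scope.

Lemma sdeg_center : sdeg vedge vsign center = 0.
Proof.
rewrite /sdeg.
have -> : [set u | vedge center u && vsign center u] = [set pendant j | j in 'I_n].
  by neighbor_set.
have -> : [set u | vedge center u && ~~ vsign center u] = [set hub i | i in 'I_n].
  by neighbor_set.
by rewrite !card_imset ?card_ord ?subrr // => i j [].
Qed.

Lemma sdeg_hub i : sdeg vedge vsign (hub i) = (m i)%:Z - 1.
Proof.
rewrite /sdeg.
have -> : [set u | vedge (hub i) u && vsign (hub i) u] = [set hub_leaf k | k in 'I_(m i)].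
  neighbor_set; rewrite andbT.
  by apply/eqP/imsetP => [<-|[k _ /(congr1 vparent) [->]]] //; exists k'.
have -> : [set u | vedge (hub i) u && ~~ vsign (hub i) u] = [set center].
  by neighbor_set.
by rewrite card_imset ?card_ord ?cards1 //; apply: hub_leaf_inj.
Qed.

Lemma sdeg_pendant j : sdeg vedge vsign (pendant j) = 1.
Proof.
rewrite /sdeg.
have -> : [set u | vedge (pendant j) u && vsign (pendant j) u] = [set center] by neighbor_set.
have -> : [set u | vedge (pendant j) u && ~~ vsign (pendant j) u] = set0 by neighbor_set.
by rewrite cards1 cards0.
Qed.

Lemma sdeg_hub_leaf i k : sdeg vedge vsign (@hub_leaf i k) = 1.
Proof.
rewrite /sdeg.
have -> : [set u | vedge (hub_leaf k) u && vsign (hub_leaf k) u] = [set hub i].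
  by neighbor_set.
have -> : [set u | vedge (hub_leaf k) u && ~~ vsign (hub_leaf k) u] = set0 by neighbor_set.
by rewrite cards1 cards0.
Qed.

Lemma vrealizes : (0 < n)%N ->
  realizes vedge vsign (1 :: 0 :: [seq (m i)%:Z - 1 | i <- enum 'I_n]).
Proof.
move=> n_gt0 z; split.
  rewrite !inE => /or3P[/eqP->|/eqP->|/mapP[i _ ->]].
  - by exists (pendant (Ordinal n_gt0)); apply: sdeg_pendant.
  - by exists center; apply: sdeg_center.
  - by exists (hub i); apply: sdeg_hub.
case=> -[[i|[j|[i k]]]|] <-.
- rewrite -[Some _]/(hub i) sdeg_hub !inE; apply/or3P/Or33/mapP.
  by exists i; rewrite ?mem_enum.
- by rewrite -[Some _]/(pendant j) sdeg_pendant inE eqxx.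
- by rewrite -[Some _]/(hub_leaf k) sdeg_hub_leaf inE eqxx.
- by rewrite -[None]/center sdeg_center !inE eqxx orbT.
Qed.

Local Close Scope ring_scope.

Lemma vdepth_le2 v : vdepth v <= 2.
Proof. by case: v => [[i|[j|[i k]]]|]. Qed.

Lemma vedge_hub_leaf i (k : 'I_(m i)) : vedge (hub i) (hub_leaf k).
Proof. by rewrite /vedge /parent_rel eqxx orbT. Qed.

Lemma vdist_le (a b : vertex) d : dist_is vedge a b d -> d <= (if n == 1 then 3 else 4).
Proof.
move=> [_ dmin]; have vsym := parent_rel_sym vparent.
have := dmin _ (walk_len_cat (walk_len_center a) (walk_len_sym vsym (walk_len_center b))).
case: ifP => [/eqP n1 le_d|_ le_d]; last first.
  by apply: leq_trans le_d _; apply: leq_add (vdepth_le2 a) (vdepth_le2 b).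
case: a b dmin le_d => [[i|[j|[i k]]]|] [[i'|[j'|[i' k']]]|] dmin le_d;
  try exact: leq_trans le_d _.
have ii' : i' = i by apply: ord_inj; have := ltn_ord i; have := ltn_ord i'; lia.
subst i'; apply: leq_trans (dmin 2 _) _ => //.
exact: walk_len_cat (walk_len_sym vsym (walk_len1 (vedge_hub_leaf k)))
  (walk_len1 (vedge_hub_leaf k')).
Qed.

Lemma vdiam : 0 < n -> (forall i, 0 < m i) -> diam_is vedge (if n == 1 then 3 else 4).
Proof.
move=> n_gt0 m_gt0; split; last exact: vdist_le.
have vdist := dist_upath (parent_rel_sym vparent) (parent_rel_acyclic vparent_depth).
pose i0 := Ordinal n_gt0; pose k0 := Ordinal (m_gt0 i0).
case: ifP => [_|/negbT n_ne1].
  exists (pendant i0), (hub_leaf k0).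
  by apply: (vdist _ [:: center; hub i0; hub_leaf k0]).
have n_gt1 : 1 < n by rewrite ltn_neqAle eq_sym n_ne1.
pose i1 := Ordinal n_gt1; pose k1 := Ordinal (m_gt0 i1).
exists (hub_leaf k0), (hub_leaf k1).
by apply: (vdist _ [:: hub i0; center; hub i1; hub_leaf k1]).
Qed.

End Construction.

Theorem mainTheorem3 (n : nat) (x : 'I_n -> int) :
  (1 <= n)%N ->
  injective x ->
  (forall i, (1 < x i)%R) ->
  diamD_is ([:: 1%R; 0%R] ++ [seq x i | i <- enum 'I_n])
           (if n == 1%N then 3 else 4).
Proof.
move=> n_gt0 x_inj x_gt1; pose m i := `|x i|.+1.
have x_m i : x i = ((m i)%:Z - 1)%R by have := x_gt1 i; rewrite /m; lia.
split.
  exists (vertex m), (vedge (m := m)), (vsign (m := m)).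
  have -> : [:: 1%R; 0%R] ++ [seq x i | i <- enum 'I_n]
            = [:: 1%R, 0%R & [seq ((m i)%:Z - 1)%R | i <- enum 'I_n]].
    by congr [:: _, _ & _]; apply: eq_map => i; rewrite x_m.
  split; [exact: vsigned_tree | exact: vrealizes | exact: vdiam].
move=> T e s d [tree_e _] realizes_D diam_d.
have sdeg_x i : exists w, sdeg e s w = x i.
  by apply/realizes_D; rewrite !inE map_f ?mem_enum ?orbT.
have [u u0] : exists u, sdeg e s u = 0%R by apply/realizes_D; rewrite !inE eqxx orbT.
have [w0 w0_x] := sdeg_x (Ordinal n_gt0).
have w0_gt1 : (1 < sdeg e s w0)%R by rewrite w0_x.
case: ifP => [_|/negbT n_ne1]; first exact: (sdeg_diam_ge3 tree_e diam_d u0 w0_gt1).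
have n_gt1 : (1 < n)%N by rewrite ltn_neqAle eq_sym n_ne1.
have [w1 w1_x] := sdeg_x (Ordinal n_gt1).
have w1_gt1 : (1 < sdeg e s w1)%R by rewrite w1_x.
apply: (sdeg_diam_ge4 tree_e diam_d u0 w0_gt1 w1_gt1).
by rewrite w0_x w1_x (inj_eq x_inj).
Qed.
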